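(* Let $\mathbf{k}$ be a field, $Q$ a finite connected quiver, $\Lambda=\mathbf{k}Q/\mathcal{J}^2$ ($\mathcal{J}$ the arrow ideal), $n\ge2$, and assume $\mathcal{C}\subseteq\operatorname{mod}\Lambda$ is an $n$-cluster tilting subcategory. Let $v\in Q_0$. (a) If $\delta^+(v)=2$, then $\delta^-(v)\ge1$. (b) If $\delta^-(v)=2$, then $\delta^+(v)\ge1$. (c) If $\delta^-(v)=\delta^+(v)=2$, then $n=2$.
   Context: Modules are finite-dimensional right modules. $\mathcal{C}$ is $n$-cluster tilting if it is functorially finite and $\mathcal{C}=\{X\mid \operatorname{Ext}^i(X,\mathcal{C})=0\ \forall 0<i<n\}=\{X\mid\operatorname{Ext}^i(\mathcal{C},X)=0\ \forall 0<i<n\}$. $\delta^-(v)$, $\delta^+(v)$ are the numbers of arrows ending, resp. starting, at $v$. *)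

From HB Require Import structures.
From mathcomp Require Import all_boot all_order all_algebra.
Set Implicit Arguments. Unset Strict Implicit. Unset Printing Implicit Defensive.
Import GRing.Theory.
Local Open Scope ring_scope.

Record quiver := Quiver {
  Q0 : finType; Q1 : finType;
  qs : Q1 -> Q0; qt : Q1 -> Q0 }.
Arguments Q0 : clear implicits. Arguments Q1 : clear implicits.
Arguments qs {_} _. Arguments qt {_} _.
Set Implicit Arguments.

Definition qadj (Q : quiver) : rel (Q0 Q) := fun u w =>
  [exists a : Q1 Q, ((qs a == u) && (qt a == w)) || ((qs a == w) && (qt a == u))].
Definition connected_quiver (Q : quiver) : Prop :=
  forall u w : Q0 Q, connect (@qadj Q) u w.

(* delta^+(v) = arrows starting at v, delta^-(v) = arrows ending at v. *)
Definition outdeg (Q : quiver) (v : Q0 Q) : nat := #|[set a : Q1 Q | qs a == v]|.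
Definition indeg  (Q : quiver) (v : Q0 Q) : nat := #|[set a : Q1 Q | qt a == v]|.

(* A finite-dimensional right module over Lambda = kQ/J^2: a k-space k^mdim
   (row vectors) with right action given by matrices for the standard
   generators e_v (vertices) and a (arrows) of kQ, subject to the defining
   relations of kQ/J^2 (paths composed left to right: a = e_{s a} a e_{t a}). *)
Record rmod (k : fieldType) (Q : quiver) := RMod {
  mdim : nat;
  me : Q0 Q -> 'M[k]_mdim;
  ma : Q1 Q -> 'M[k]_mdim;
  me_orth : forall u w, me u *m me w = if u == w then me u else 0;
  me_sum : \sum_(u : Q0 Q) me u = 1%:M;
  ma_idem : forall a, me (qs a) *m ma a *m me (qt a) = ma a;
  ma_rad2 : forall a b, ma a *m ma b = 0 }.

Section Homological.
Variables (k : fieldType) (Q : quiver).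
Local Notation mod := (rmod k Q).

Definition is_hom (X Y : mod) (f : 'M[k]_(mdim X, mdim Y)) : Prop :=
  (forall v, me X v *m f = f *m me Y v) /\ (forall a, ma X a *m f = f *m ma Y a).

Definition is_exact (l m p : nat) (f : 'M[k]_(l, m)) (g : 'M[k]_(m, p)) : Prop :=
  f *m g = 0 /\ (kermx g <= f)%MS.

Definition projective (P : mod) : Prop :=
  forall (X Z : mod) (g : 'M[k]_(mdim X, mdim Z)), is_hom g -> row_full g ->
  forall h : 'M[k]_(mdim P, mdim Z), is_hom h ->
  exists l : 'M[k]_(mdim P, mdim X), is_hom l /\ l *m g = h.

Definition proj_res (X : mod) (P : nat -> mod)
  (d : forall j, 'M[k]_(mdim (P j.+1), mdim (P j)))
  (eps : 'M[k]_(mdim (P 0), mdim X)) : Prop :=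
  [/\ forall j, projective (P j),
      forall j, is_hom (d j),
      is_hom eps /\ row_full eps,
      is_exact (d 0) eps &
      forall j, is_exact (d j.+1) (d j)].

(* Ext^{j+1}(X, Y) = H^{j+1}(Hom(P_., Y)) = 0 for a projective resolution P of X. *)
Definition ext_vanish (i : nat) (X Y : mod) : Prop :=
  match i with
  | 0 => forall f : 'M[k]_(mdim X, mdim Y), is_hom f -> f = 0
  | j.+1 => forall P d eps, @proj_res X P d eps ->
      forall f : 'M[k]_(mdim (P j.+1), mdim Y), is_hom f -> d j.+1 *m f = 0 ->
      exists g : 'M[k]_(mdim (P j), mdim Y), is_hom g /\ f = d j *m g
  end.

Definition contravariantly_finite (C : mod -> Prop) : Prop :=
  forall X : mod, exists (CX : mod) (f : 'M[k]_(mdim CX, mdim X)),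
    [/\ C CX, is_hom f &
      forall (Y : mod) (g : 'M[k]_(mdim Y, mdim X)), C Y -> is_hom g ->
        exists h : 'M[k]_(mdim Y, mdim CX), is_hom h /\ g = h *m f].

Definition covariantly_finite (C : mod -> Prop) : Prop :=
  forall X : mod, exists (CX : mod) (f : 'M[k]_(mdim X, mdim CX)),
    [/\ C CX, is_hom f &
      forall (Y : mod) (g : 'M[k]_(mdim X, mdim Y)), C Y -> is_hom g ->
        exists h : 'M[k]_(mdim CX, mdim Y), is_hom h /\ g = f *m h].

Definition functorially_finite (C : mod -> Prop) : Prop :=
  contravariantly_finite C /\ covariantly_finite C.

Definition n_cluster_tilting (n : nat) (C : mod -> Prop) : Prop :=
  [/\ functorially_finite C,
      (forall X : mod, C X <->
         (forall i, (0 < i < n)%N -> forall Y : mod, C Y -> ext_vanish i X Y)) &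
      (forall X : mod, C X <->
         (forall i, (0 < i < n)%N -> forall Y : mod, C Y -> ext_vanish i Y X))].

End Homological.

From mathcomp Require Import all_boot all_order all_algebra.
Set Implicit Arguments. Unset Strict Implicit. Unset Printing Implicit Defensive.
Import GRing.Theory.
Local Open Scope ring_scope.

(* As J^2 = 0, syzygies are semisimple and minimal projective resolutions are
   explicit: the radical of P_u is the sum of the S_(t a) over the arrows a
   leaving u.  Both P_v and I_v lie in C, hence Ext^i(I_v, P_v) = 0 for
   0 < i < n, and each case produces a nonzero such group.  At a source,
   I_v = S_v and two arrows a0, a1 leaving v give Ext^1(S_v, P_v) <> 0: the map
   rad P_v -> P_v fixing a0 and killing a1 does not extend to P_v.  At a sink,
   P_v = S_v and two arrows c0, c1 entering v make S_v (spanned by c0 - c1) a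
   summand of the syzygy of I_v, so Ext^1(I_v, S_v) <> 0.  With two arrows in
   and two out, Ext^2(I_v, P_v) contains Ext^1(S_v, P_v) <> 0, so n <= 2. *)

Section RadicalSquareZero.
Variables (k : fieldType) (Q : quiver).
Local Notation mod := (rmod k Q).

Lemma me_ma (M : mod) u a :
  me M u *m ma M a = if u == qs a then ma M a else 0.
Proof.
rewrite -{1}(ma_idem M a) !mulmxA me_orth.
by case: eqP => [->|_]; [exact: ma_idem | rewrite !mul0mx].
Qed.

Lemma ma_me (M : mod) a u :
  ma M a *m me M u = if qt a == u then ma M a else 0.
Proof.
rewrite -{1}(ma_idem M a) -!mulmxA me_orth.
by case: eqP => _; [rewrite mulmxA ma_idem | rewrite !mulmx0].
Qed.

Lemma hom_id (X : mod) : is_hom (1%:M : 'M[k]_(mdim X)).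
Proof. by split=> *; rewrite mul1mx mulmx1. Qed.

Lemma hom_mul (X Y Z : mod) (f : 'M[k]_(mdim X, mdim Y)) (g : 'M[k]_(mdim Y, mdim Z)) :
  is_hom f -> is_hom g -> is_hom (f *m g).
Proof.
case=> fe fa [ge ga]; split.
  by move=> u; rewrite mulmxA fe -mulmxA ge mulmxA.
by move=> a; rewrite mulmxA fa -mulmxA ga mulmxA.
Qed.

Lemma hom_sub (X Y : mod) (f g : 'M[k]_(mdim X, mdim Y)) :
  is_hom f -> is_hom g -> is_hom (f - g).
Proof.
case=> fe fa [ge ga]; split.
  by move=> u; rewrite mulmxBr mulmxBl fe ge.
by move=> a; rewrite mulmxBr mulmxBl fa ga.
Qed.

Lemma sum_pick_inj (I : finType) (T : eqType) (e : I -> T) (e_inj : injective e)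
    (F : I -> k) i0 :
  \sum_i (e i == e i0)%:R * F i = F i0.
Proof.
rewrite (bigD1 i0) //= eqxx mul1r big1 ?addr0 // => i ni.
by rewrite (inj_eq e_inj) (negbTE ni) mul0r.
Qed.

Lemma sum_pick (I : finType) (F : I -> k) i0 : \sum_i (i == i0)%:R * F i = F i0.
Proof. exact: (sum_pick_inj (@inj_id _)). Qed.

Lemma sum_pick_none (I : finType) (T : eqType) (e : I -> T) (F : I -> k) x :
  (forall i, e i != x) -> \sum_i (e i == x)%:R * F i = 0.
Proof. by move=> ex; apply: big1 => i _; rewrite (negbTE (ex i)) mul0r. Qed.

Definition vert_mx n (l : 'I_n -> Q0 Q) u : 'M[k]_n := diag_mx (\row_i (l i == u)%:R).

Lemma vert_mxE n (l : 'I_n -> Q0 Q) u i j : vert_mx l u i j = ((i == j) && (l i == u))%:R.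
Proof. by rewrite !mxE; case: (i == j); rewrite ?mulr0n ?mulr1n. Qed.

Lemma mul_vert_mx n p (l : 'I_n -> Q0 Q) u (F : 'M[k]_(n, p)) i j :
  (vert_mx l u *m F) i j = (l i == u)%:R * F i j.
Proof. by rewrite mul_diag_mx !mxE. Qed.

Lemma mul_mx_vert n p (l : 'I_p -> Q0 Q) u (F : 'M[k]_(n, p)) i j :
  (F *m vert_mx l u) i j = F i j * (l j == u)%:R.
Proof. by rewrite mul_mx_diag !mxE. Qed.

Lemma row_vert_mx n p (l : 'I_n -> Q0 Q) u (F : 'M[k]_(n, p)) i :
  row i (vert_mx l u *m F) = (l i == u)%:R *: row i F.
Proof. by apply/rowP => j; rewrite [LHS]mxE mul_vert_mx !mxE. Qed.

Lemma vert_mx_orth n (l : 'I_n -> Q0 Q) u w :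
  vert_mx l u *m vert_mx l w = if u == w then vert_mx l u else 0.
Proof.
apply/matrixP => i j; rewrite mul_vert_mx vert_mxE.
case: (eqVneq u w) => [<-|uw].
  by rewrite vert_mxE; case: (l i == u); rewrite ?mul1r ?mul0r ?andbF.
rewrite mxE; case: (eqVneq (l i) u) => [->|_]; last by rewrite mul0r.
by rewrite (negbTE uw) andbF mulr0.
Qed.

Lemma sum_vert_mx n (l : 'I_n -> Q0 Q) : \sum_u vert_mx l u = 1%:M.
Proof.
apply/matrixP => i j; rewrite summxE mxE (bigD1 (l i)) //= vert_mxE eqxx andbT.
by rewrite big1 ?addr0 // => u nu; rewrite vert_mxE (eq_sym (l i)) (negbTE nu) andbF.
Qed.

Definition arrow_compat t s (lt : 'I_t -> Q0 Q) (ls : 'I_s -> Q0 Q)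
    (A : Q1 Q -> 'M[k]_(t, s)) :=
  forall a i j, A a i j != 0 -> (lt i == qs a) && (ls j == qt a).

(* The module with basis (top) ++ (socle), the top vectors at the vertices [lt]
   and the socle vectors at [ls]; an arrow [a] acts as [A a] from top to socle
   and kills the socle, as J^2 = 0 allows. *)
Section Layered.
Variables (t s : nat) (lt : 'I_t -> Q0 Q) (ls : 'I_s -> Q0 Q)
  (A : Q1 Q -> 'M[k]_(t, s)).
Hypothesis A_compat : arrow_compat lt ls A.

Definition layered_me u : 'M[k]_(t + s) := block_mx (vert_mx lt u) 0 0 (vert_mx ls u).
Definition layered_ma a : 'M[k]_(t + s) := block_mx 0 (A a) 0 0.

Lemma layered_me_orth u w :
  layered_me u *m layered_me w = if u == w then layered_me u else 0.
Proof.
rewrite /layered_me mulmx_block !mulmx0 !mul0mx !addr0 !add0r !vert_mx_orth.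
by case: eqP => // _; rewrite block_mx0.
Qed.

Lemma layered_me_sum : \sum_u layered_me u = 1%:M.
Proof.
have -> : \sum_u layered_me u =
    block_mx (\sum_u vert_mx lt u) 0 0 (\sum_u vert_mx ls u).
  apply: (big_rec3 (fun x y z => x = block_mx y 0 0 z)); first by rewrite block_mx0.
  by move=> u x y z _ ->; rewrite /layered_me add_block_mx !addr0.
by rewrite !sum_vert_mx -scalar_mx_block.
Qed.

Lemma layered_ma_idem a :
  layered_me (qs a) *m layered_ma a *m layered_me (qt a) = layered_ma a.
Proof.
rewrite /layered_me /layered_ma !mulmx_block !mulmx0 !mul0mx !addr0 !add0r.
congr block_mx; rewrite ?mul0mx //; apply/matrixP => i j.
rewrite mul_mx_vert mul_vert_mx.
have [/A_compat/andP[/eqP -> /eqP ->]|/negPn/eqP ->] := boolP (A a i j != 0).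
  by rewrite !eqxx mul1r mulr1.
by rewrite !mulr0 mul0r.
Qed.

Lemma layered_ma_rad2 a b : layered_ma a *m layered_ma b = 0.
Proof. by rewrite /layered_ma mulmx_block !mulmx0 !mul0mx !addr0 block_mx0. Qed.

Definition layered : mod :=
  RMod layered_me_orth layered_me_sum layered_ma_idem layered_ma_rad2.

End Layered.

Lemma layered_homP t1 s1 (lt1 : 'I_t1 -> Q0 Q) (ls1 : 'I_s1 -> Q0 Q)
    (A1 : Q1 Q -> 'M[k]_(t1, s1)) (HA1 : arrow_compat lt1 ls1 A1)
    t2 s2 (lt2 : 'I_t2 -> Q0 Q) (ls2 : 'I_s2 -> Q0 Q)
    (A2 : Q1 Q -> 'M[k]_(t2, s2)) (HA2 : arrow_compat lt2 ls2 A2)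
    (F11 : 'M[k]_(t1, t2)) F12 F21 F22 :
  is_hom (X := layered HA1) (Y := layered HA2) (block_mx F11 F12 F21 F22) <->
  [/\ forall u, vert_mx lt1 u *m F11 = F11 *m vert_mx lt2 u,
      forall u, vert_mx lt1 u *m F12 = F12 *m vert_mx ls2 u,
      forall u, vert_mx ls1 u *m F21 = F21 *m vert_mx lt2 u,
      forall u, vert_mx ls1 u *m F22 = F22 *m vert_mx ls2 u &
      forall a, [/\ A1 a *m F21 = 0, A1 a *m F22 = F11 *m A2 a & F21 *m A2 a = 0]].
Proof.
rewrite /is_hom /= /layered_me /layered_ma; split.
  case=> Hme Hma; split.
  1-4: by move=> u; have := Hme u;
    rewrite !mulmx_block !mulmx0 !mul0mx !addr0 !add0r; case/eq_block_mx.
  move=> a; have := Hma a; rewrite !mulmx_block !mulmx0 !mul0mx !addr0 !add0r.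
  by case/eq_block_mx => E1 E2 _ E4; split; rewrite -?E4.
case=> H1 H2 H3 H4 H5; split => [u|a].
  by rewrite !mulmx_block !mulmx0 !mul0mx !addr0 !add0r H1 H2 H3 H4.
by case: (H5 a) => E1 E2 E3; rewrite !mulmx_block !mulmx0 !mul0mx !addr0 !add0r E1 E2 E3.
Qed.

Definition rad_basis n (l : 'I_n -> Q0 Q) := {p : 'I_n * Q1 Q | qs p.2 == l p.1}.
Definition rad_dim n (l : 'I_n -> Q0 Q) := #|{: rad_basis l}|.
Definition rad_elt n (l : 'I_n -> Q0 Q) (j : 'I_(rad_dim l)) : 'I_n * Q1 Q :=
  val (enum_val j).
Arguments rad_elt [n] l j.
Definition rad_label n (l : 'I_n -> Q0 Q) (j : 'I_(rad_dim l)) : Q0 Q :=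
  qt (rad_elt l j).2.
Arguments rad_label [n] l j.
Definition rad_arrow_mx n (l : 'I_n -> Q0 Q) a : 'M[k]_(n, rad_dim l) :=
  \matrix_(i, j) (rad_elt l j == (i, a))%:R.
Definition rad_pair n (l : 'I_n -> Q0 Q) i a (H : qs a == l i) : rad_basis l :=
  exist (fun p : 'I_n * Q1 Q => qs p.2 == l p.1) (i, a) H.

Lemma rad_elt_inj n (l : 'I_n -> Q0 Q) : injective (rad_elt l).
Proof. by move=> i j /val_inj /enum_val_inj. Qed.

Lemma rad_eltP n (l : 'I_n -> Q0 Q) j : qs (rad_elt l j).2 == l (rad_elt l j).1.
Proof. exact: (valP (enum_val j)). Qed.

Lemma rad_elt_pair n (l : 'I_n -> Q0 Q) i a (H : qs a == l i) :
  rad_elt l (enum_rank (rad_pair H)) = (i, a).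
Proof. by rewrite /rad_elt enum_rankK. Qed.

Lemma sum_rad_pair n (l : 'I_n -> Q0 Q) (F : 'I_(rad_dim l) -> k) i a (H : qs a == l i) :
  \sum_j (rad_elt l j == (i, a))%:R * F j = F (enum_rank (rad_pair H)).
Proof. by rewrite -(rad_elt_pair H) (sum_pick_inj (rad_elt_inj (l:=l))). Qed.

Lemma sum_rad_none n (l : 'I_n -> Q0 Q) (F : 'I_(rad_dim l) -> k) i a :
  qs a != l i -> \sum_j (rad_elt l j == (i, a))%:R * F j = 0.
Proof.
move=> Ha; apply: sum_pick_none => j; apply: contra Ha => /eqP E.
by have := rad_eltP j; rewrite E.
Qed.

Lemma rad_arrow_compat n (l : 'I_n -> Q0 Q) :
  arrow_compat l (rad_label l) (rad_arrow_mx l).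
Proof.
move=> a i j; rewrite mxE.
case: (rad_elt l j =P (i, a)) => [E _|_]; last by rewrite mulr0n eqxx.
by have := rad_eltP j; rewrite /rad_label E /= eq_sym => ->; rewrite eqxx.
Qed.

Lemma rad_pair_rank n (l : 'I_n -> Q0 Q) j :
  enum_rank (rad_pair (l := l) (rad_eltP j)) = j.
Proof. by apply: (rad_elt_inj (l:=l)); rewrite rad_elt_pair -surjective_pairing. Qed.

Lemma row_rad_arrow_mx n (l : 'I_n -> Q0 Q) a p (M : 'M[k]_(rad_dim l, p)) i
    (H : qs a == l i) :
  row i (rad_arrow_mx l a *m M) = row (enum_rank (rad_pair H)) M.
Proof.
apply/rowP => q; rewrite !mxE; under eq_bigr do rewrite mxE.
by rewrite (sum_rad_pair _ H).
Qed.

Lemma row_rad_arrow_mx0 n (l : 'I_n -> Q0 Q) a p (M : 'M[k]_(rad_dim l, p)) i :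
  qs a != l i -> row i (rad_arrow_mx l a *m M) = 0.
Proof.
move=> H; apply/rowP => q; rewrite !mxE; under eq_bigr do rewrite mxE.
exact: sum_rad_none.
Qed.

(* [proj_sum l] is the direct sum of the P_(l i): its top vector i is the idempotent
   e_(l i), and its socle has one vector (i, a) for each arrow a starting at l i. *)
Definition proj_sum n (l : 'I_n -> Q0 Q) : mod := layered (@rad_arrow_compat n l).

Lemma proj_sum_homE n (l : 'I_n -> Q0 Q) (Y : mod) (g : 'M[k]_(n + rad_dim l, mdim Y)) :
  is_hom (X := proj_sum l) (Y := Y) g ->
  (forall i, row i (usubmx g) *m me Y (l i) = row i (usubmx g)) /\
  (forall j, row j (dsubmx g) = row (rad_elt l j).1 (usubmx g) *m ma Y (rad_elt l j).2).
Proof.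
case=> Hme Hma; rewrite -[g]vsubmxK in Hme Hma; split.
  move=> i; have := Hme (l i).
  rewrite /= /layered_me mul_block_col mul_col_mx !mul0mx !addr0 add0r.
  by case/eq_col_mx => E _; rewrite -row_mul -E row_vert_mx eqxx scale1r.
move=> j; have := Hma (rad_elt l j).2.
rewrite /= /layered_ma mul_block_col mul_col_mx !mul0mx !add0r => /eq_col_mx[E _].
by rewrite -row_mul -E (row_rad_arrow_mx _ (rad_eltP j)) rad_pair_rank.
Qed.

Definition proj_sum_hom n (l : 'I_n -> Q0 Q) (Y : mod) (g : 'M[k]_(n, mdim Y)) :
    'M[k]_(n + rad_dim l, mdim Y) :=
  col_mx g (\matrix_j (row (rad_elt l j).1 g *m ma Y (rad_elt l j).2)).

Lemma proj_sum_homP n (l : 'I_n -> Q0 Q) (Y : mod) (g : 'M[k]_(n, mdim Y)) :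
  (forall i, row i g *m me Y (l i) = row i g) ->
  is_hom (X := proj_sum l) (Y := Y) (proj_sum_hom l g).
Proof.
move=> gl; split=> [u|a].
  rewrite /= /layered_me mul_block_col mul_col_mx !mul0mx !addr0 add0r.
  congr col_mx; apply/row_matrixP => i; rewrite row_vert_mx row_mul.
    rewrite -[in RHS]gl -mulmxA me_orth.
    by case: eqP => _; [rewrite scale1r gl | rewrite scale0r mulmx0].
  rewrite rowK -mulmxA ma_me /rad_label eq_sym.
  by case: eqP => _; rewrite ?scale1r ?scale0r ?mulmx0.
rewrite /= /layered_ma mul_block_col mul_col_mx !mul0mx !add0r.
congr col_mx; apply/row_matrixP => i; last first.
  by rewrite row_mul rowK -mulmxA ma_rad2 mulmx0 row0.
have [H|H] := boolP (qs a == l i).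
  by rewrite (row_rad_arrow_mx _ H) rowK rad_elt_pair row_mul.
by rewrite row_rad_arrow_mx0 // row_mul -gl -mulmxA me_ma eq_sym (negbTE H) mulmx0.
Qed.

Lemma proj_sum_projective n (l : 'I_n -> Q0 Q) : projective (proj_sum l).
Proof.
move=> X Z g Hg g_full h Hh; have [h_top h_rad] := proj_sum_homE Hh.
pose L := \matrix_i (row i (usubmx h *m pinvmx g) *m me X (l i)).
have LgE : L *m g = usubmx h.
  apply/row_matrixP => i; rewrite row_mul rowK -mulmxA (proj1 Hg) mulmxA.
  by rewrite -row_mul mulmxKpV ?submx_full // h_top.
exists (proj_sum_hom l L); split.
  by apply: proj_sum_homP => i; rewrite rowK -mulmxA me_orth eqxx.
rewrite -[h]vsubmxK mul_col_mx LgE; congr col_mx.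
apply/row_matrixP => j; rewrite row_mul rowK -mulmxA (proj2 Hg) mulmxA.
by rewrite -row_mul LgE h_rad.
Qed.

Section Submodule.
Variables (Z : mod) (r : nat) (B : 'M[k]_(r, mdim Z)).
Hypotheses (B_free : row_free B) (B_me : forall u, (B *m me Z u <= B)%MS)
  (B_ma : forall a, (B *m ma Z a <= B)%MS).

Definition sub_me u := B *m me Z u *m pinvmx B.
Definition sub_ma a := B *m ma Z a *m pinvmx B.

Lemma sub_meB u : sub_me u *m B = B *m me Z u. Proof. exact: mulmxKpV. Qed.
Lemma sub_maB a : sub_ma a *m B = B *m ma Z a. Proof. exact: mulmxKpV. Qed.

Lemma sub_me_orth u w : sub_me u *m sub_me w = if u == w then sub_me u else 0.
Proof.
apply: (row_free_inj B_free); rewrite /= -mulmxA sub_meB mulmxA sub_meB -mulmxA me_orth.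
by case: eqP => _; rewrite ?sub_meB ?mul0mx ?mulmx0.
Qed.

Lemma sub_me_sum : \sum_u sub_me u = 1%:M.
Proof.
apply: (row_free_inj B_free); rewrite /= mulmx_suml.
under eq_bigr do rewrite sub_meB.
by rewrite -mulmx_sumr me_sum mulmx1 mul1mx.
Qed.

Lemma sub_ma_idem a : sub_me (qs a) *m sub_ma a *m sub_me (qt a) = sub_ma a.
Proof.
apply: (row_free_inj B_free); rewrite /= sub_maB -mulmxA sub_meB mulmxA.
rewrite -[sub_me _ *m sub_ma _ *m B]mulmxA sub_maB mulmxA sub_meB.
by rewrite -!mulmxA (mulmxA (me Z _)) ma_idem.
Qed.

Lemma sub_ma_rad2 a b : sub_ma a *m sub_ma b = 0.
Proof.
apply: (row_free_inj B_free); rewrite /= -mulmxA sub_maB mulmxA sub_maB -mulmxA.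
by rewrite ma_rad2 mulmx0 mul0mx.
Qed.

Definition submod : mod := RMod sub_me_orth sub_me_sum sub_ma_idem sub_ma_rad2.

Lemma hom_submod (M : mod) (F : 'M[k]_(mdim M, mdim Z)) :
  is_hom F -> (F <= B)%MS -> is_hom (Y := submod) (F *m pinvmx B).
Proof.
move=> [Fe Fa] FB.
have FpB (C : 'M[k]_(mdim Z)) :
    F *m C *m pinvmx B = F *m pinvmx B *m (B *m C *m pinvmx B).
  by rewrite [RHS]mulmxA [F *m _ *m (B *m C)]mulmxA mulmxKpV.
by split=> [u|a]; rewrite /= /sub_me /sub_ma mulmxA ?Fe ?Fa FpB.
Qed.

End Submodule.

Lemma projective_lift (P X Z : mod) (g : 'M[k]_(mdim X, mdim Z))
    (h : 'M[k]_(mdim P, mdim Z)) :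
  projective P -> is_hom g -> is_hom h -> (h <= g)%MS ->
  exists l : 'M[k]_(mdim P, mdim X), is_hom l /\ l *m g = h.
Proof.
move=> HP Hg Hh hg; set B := row_base g.
have gB : (g <= B)%MS by rewrite eq_row_base.
have Bg : (B <= g)%MS by rewrite eq_row_base.
have B_stable (C : 'M[k]_(mdim Z)) (C' : 'M[k]_(mdim X)) :
    C' *m g = g *m C -> (B *m C <= B)%MS.
  move=> E; apply: submx_trans (submxMr _ Bg) _.
  by rewrite -E; apply: submx_trans (submxMl _ _) gB.
have B_me u := B_stable _ _ (proj1 Hg u).
have B_ma a := B_stable _ _ (proj2 Hg a).
have B_free : row_free B by exact: row_base_free.
have g_full : row_full (g *m pinvmx B).
  rewrite /row_full eqn_leq rank_leq_col /=.
  by rewrite -{1}(mulmxKpV gB) mxrankM_maxl.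
have hB := submx_trans hg gB.
have [l [Hl lgE]] := HP _ _ _ (hom_submod B_free B_me B_ma Hg gB) g_full _
  (hom_submod B_free B_me B_ma Hh hB).
by exists l; rewrite -(mulmxKpV gB) mulmxA lgE mulmxKpV.
Qed.

Lemma exact_sub (l m p q : nat) (d : 'M[k]_(l, m)) (f : 'M[k]_(m, p)) (A : 'M[k]_(q, m)) :
  is_exact d f -> A *m f = 0 -> (A <= d)%MS.
Proof. by case=> _ kf Af; apply: submx_trans kf; apply/sub_kermxP. Qed.

Lemma exact_split_step (P2 P1 W : mod) (d : 'M[k]_(mdim P2, mdim P1))
    (f : 'M[k]_(mdim P1, mdim W)) (t : 'M[k]_(mdim W, mdim P1)) :
  projective P1 -> is_hom d -> is_hom f -> is_hom t -> is_exact d f ->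
  f *m t *m f = f ->
  exists s : 'M[k]_(mdim P1, mdim P2), is_hom s /\ d *m s *m d = d.
Proof.
move=> HP Hd Hf Ht dfx ftf; set e := 1%:M - f *m t.
have He : is_hom e by apply: hom_sub; [exact: hom_id | exact: hom_mul].
have ef0 : e *m f = 0 by rewrite mulmxBl mul1mx ftf subrr.
have [s [Hs sdE]] := projective_lift HP Hd He (exact_sub dfx ef0).
exists s; split => //.
by rewrite -mulmxA sdE mulmxBr mulmx1 mulmxA (proj1 dfx) mul0mx subr0.
Qed.

Lemma ext_vanish_proj (P : mod) j (Y : mod) : projective P -> ext_vanish j.+1 P Y.
Proof.
move=> HP R d eps [R_proj Hd [Heps eps_full] dx0 dx] f Hf df0.
have split_d i : exists s, is_hom s /\ d i *m s *m d i = d i.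
  elim: i => [|i [s [Hs dsd]]].
    have [t [Ht teps]] := HP _ _ eps Heps eps_full _ (hom_id P).
    apply: exact_split_step (R_proj 0) (Hd 0) Heps Ht dx0 _.
    by rewrite -mulmxA teps mulmx1.
  exact: exact_split_step (R_proj i.+1) (Hd i.+1) (Hd i) Hs (dx i) dsd.
have [s [Hs dsd]] := split_d j.
exists (s *m f); split; first exact: hom_mul.
have e0 : (1%:M - d j *m s) *m d j = 0 by rewrite mulmxBl mul1mx dsd subrr.
have /submxP[D De] := exact_sub (dx j) e0.
have : (1%:M - d j *m s) *m f = 0 by rewrite De -mulmxA df0 mulmx0.
by rewrite mulmxBl mul1mx mulmxA => /eqP; rewrite subr_eq0 => /eqP.
Qed.

Definition arr_in v := {a : Q1 Q | qt a == v}.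
Definition in_dim v := #|{: arr_in v}|.
Definition in_arrow v (t : 'I_(in_dim v)) : Q1 Q := val (enum_val t).
Definition inj_label v (t : 'I_(in_dim v)) : Q0 Q := qs (in_arrow t).
Definition inj_arrow_mx v a : 'M[k]_(in_dim v, 1) := \matrix_(t, _) (in_arrow t == a)%:R.

Lemma in_arrowP v t : qt (in_arrow (v := v) t) == v.
Proof. exact: (valP (enum_val t)). Qed.

Lemma in_arrow_inj v : injective (@in_arrow v).
Proof. by move=> s t /val_inj /enum_val_inj. Qed.

Lemma in_arrow_rank v a (H : qt a == v) :
  in_arrow (enum_rank (exist _ a H : arr_in v)) = a.
Proof. by rewrite /in_arrow enum_rankK. Qed.

Lemma sum_in_arrow v (F : 'I_(in_dim v) -> k) a (H : qt a == v) :
  \sum_t (in_arrow t == a)%:R * F t = F (enum_rank (exist _ a H : arr_in v)).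
Proof. by rewrite -{1}(in_arrow_rank H) (sum_pick_inj (@in_arrow_inj v)). Qed.

Lemma inj_arrow_compat v :
  arrow_compat (@inj_label v) (fun _ : 'I_1 => v) (inj_arrow_mx v).
Proof.
move=> a t j; rewrite mxE; case: (in_arrow t =P a) => [E _|_]; last by rewrite eqxx.
by rewrite /inj_label E eqxx eq_sym -E in_arrowP.
Qed.

(* The injective I_v = D(Lambda e_v): its socle is S_v, and each arrow c ending
   at v contributes a top vector at the vertex s c, mapped onto the socle by c. *)
Definition inj_at v : mod := layered (@inj_arrow_compat v).
Definition proj_at v : mod := proj_sum (fun _ : 'I_1 => v).

Lemma factor_kermx0 (p m q : nat) (d : 'M[k]_(p, m)) (x : 'M[k]_(p, q)) :
  kermx d *m x = 0 -> exists y : 'M[k]_(m, q), x = d *m y.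
Proof.
move=> kx; have xK : (x^T <= kermx (kermx d)^T)%MS.
  by apply/sub_kermxP; rewrite -trmx_mul kx trmx0.
have dK : (d^T <= kermx (kermx d)^T)%MS.
  by apply/sub_kermxP; rewrite -trmx_mul mulmx_ker trmx0.
have Kd : (kermx (kermx d)^T <= d^T)%MS.
  rewrite -(mxrank_leqif_sup dK) mxrank_tr mxrank_ker mxrank_tr mxrank_ker.
  by rewrite subKn ?rank_leq_row.
have [D ED] := submxP (submx_trans xK Kd).
by exists D^T; rewrite -[x]trmxK ED trmx_mul trmxK.
Qed.

(* Hom(M, I_v) is the dual of M e_v: the linear form [c] on M e_v gives the
   homomorphism [inj_hom v c]. *)
Definition inj_hom (M : mod) v (c : 'M[k]_(mdim M, 1)) : 'M[k]_(mdim M, in_dim v + 1) :=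
  row_mx (\matrix_(r, t) ((ma M (in_arrow t) *m c) r 0)) c.

Lemma mulmx_colsE (m p n : nat) (A : 'M[k]_(m, p)) (G : 'I_n -> 'M[k]_(p, 1)) r t :
  (A *m \matrix_(i, j) (G j i 0)) r t = (A *m G t) r 0.
Proof. by rewrite !mxE; apply: eq_bigr => i _; rewrite mxE. Qed.

Lemma inj_homP (M : mod) v (c : 'M[k]_(mdim M, 1)) :
  me M v *m c = c -> is_hom (Y := inj_at v) (inj_hom v c).
Proof.
move=> vc; split=> [u|a].
  rewrite /= /layered_me /inj_hom mul_mx_row mul_row_block ?mulmx0 ?addr0 ?add0r.
  congr row_mx; apply/matrixP => r i.
    rewrite mul_mx_vert mulmx_colsE mulmxA me_ma [in RHS]mxE /inj_label eq_sym.
    by case: eqP => _; [rewrite mulr1 | rewrite mul0mx mulr0 mxE].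
  rewrite mul_mx_vert -vc mulmxA me_orth.
  by case: (eqVneq u v) => [->|_]; rewrite ?mulr1 // mul0mx mxE mulr0.
rewrite /= /layered_ma /inj_hom mul_mx_row mul_row_block !mulmx0 !addr0 ?add0r.
congr row_mx.
  by apply/matrixP => r t; rewrite mulmx_colsE mulmxA ma_rad2 mul0mx !mxE.
apply/matrixP => r i; rewrite [RHS]mxE (ord1 i).
under eq_bigr do rewrite [inj_arrow_mx _ _ _ _]mxE mulrC.
have [H|H] := boolP (qt a == v).
  by rewrite (sum_in_arrow _ H) mxE in_arrow_rank.
rewrite sum_pick_none => [|t]; last by apply: contraNneq H => <-; exact: in_arrowP.
by rewrite -vc mulmxA ma_me (negbTE H) mul0mx mxE.
Qed.

Lemma inj_homE (M : mod) v (F : 'M[k]_(mdim M, in_dim v + 1)) :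
  is_hom (Y := inj_at v) F -> F = inj_hom v (rsubmx F) /\ me M v *m rsubmx F = rsubmx F.
Proof.
case=> Hme Hma; rewrite -[F]hsubmxK in Hme Hma *; rewrite row_mxKr; split.
  congr row_mx; apply/matrixP => r t; have := Hma (in_arrow t).
  rewrite /= /layered_ma mul_mx_row mul_row_block ?mulmx0 ?addr0 ?add0r.
  case/eq_row_mx => _ E; rewrite [RHS]mxE E [RHS]mxE.
  under eq_bigr do rewrite [inj_arrow_mx _ _ _ _]mxE mulrC.
  by rewrite (sum_pick_inj (@in_arrow_inj v)).
have := Hme v; rewrite /= /layered_me mul_mx_row mul_row_block ?mulmx0 ?addr0 ?add0r.
case/eq_row_mx => _ ->; apply/matrixP => r i.
by rewrite mul_mx_vert eqxx mulr1.
Qed.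

Lemma mul_inj_hom (A B : mod) v (d : 'M[k]_(mdim A, mdim B)) (c : 'M[k]_(mdim B, 1)) :
  is_hom d -> d *m inj_hom v c = inj_hom v (d *m c).
Proof.
case=> _ Hd; rewrite /inj_hom mul_mx_row; congr row_mx.
by apply/matrixP => r t; rewrite mulmx_colsE mulmxA -Hd -mulmxA [RHS]mxE.
Qed.

Lemma inj_extend v (A B : mod) (d : 'M[k]_(mdim A, mdim B))
    (f : 'M[k]_(mdim A, mdim (inj_at v))) :
  is_hom d -> is_hom f -> kermx d *m f = 0 ->
  exists g : 'M[k]_(mdim B, mdim (inj_at v)), is_hom g /\ f = d *m g.
Proof.
move=> Hd Hf kf; have [fE vc] := inj_homE Hf.
have : kermx d *m rsubmx (f : 'M_(_, in_dim v + 1)) = 0.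
  by rewrite mulmx_rsub kf; apply/matrixP => i j; rewrite !mxE.
case/factor_kermx0 => y yE.
exists (inj_hom v (me B v *m y)); split.
  by apply: inj_homP; rewrite mulmxA me_orth eqxx.
by rewrite mul_inj_hom // fE mulmxA -(proj1 Hd) -mulmxA -yE vc.
Qed.

Lemma ext_vanish_inj v j (Y : mod) : ext_vanish j.+1 Y (inj_at v).
Proof.
move=> R d eps [_ Hd _ _ dx] f Hf df0; apply: inj_extend => //.
have /submxP[D ->] := exact_sub (dx j) (mulmx_ker (d j)).
by rewrite -mulmxA df0 mulmx0.
Qed.

Definition rad_incl n (l : 'I_n -> Q0 Q) :
    'M[k]_(mdim (proj_sum (rad_label l)), mdim (proj_sum l)) := block_mx 0 1%:M 0 0.

Lemma rad_incl_hom n (l : 'I_n -> Q0 Q) : is_hom (rad_incl l).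
Proof. by apply/layered_homP; split=> *; rewrite ?mulmx0 ?mul0mx ?mulmx1 ?mul1mx. Qed.

Lemma kermx_in_rad a b b' c (E : 'M[k]_(a + b, c)) :
  (forall A : 'M[k]_(a + b, a + b), A *m E = 0 -> lsubmx A = 0) ->
  (kermx E <= block_mx (0 : 'M[k]_(b, a)) 1%:M (0 : 'M[k]_(b', a)) 0)%MS.
Proof.
move=> top0; apply/submxP; exists (row_mx (rsubmx (kermx E)) 0).
rewrite mul_row_block !mulmx0 !addr0 mulmx1.
by rewrite -[LHS]hsubmxK (top0 _ (mulmx_ker E)).
Qed.

(* Labels of the successive syzygies of the semisimple module with labels [l]:
   since J^2 = 0, the syzygy of a semisimple module is the radical of its
   projective cover. *)
Fixpoint syz_labels n (l : 'I_n -> Q0 Q) j : {m : nat & 'I_m -> Q0 Q} :=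
  if j is j'.+1 then existT _ _ (rad_label (projT2 (syz_labels l j'))) else existT _ n l.

(* The projective resolution whose first syzygy is embedded by [Iota] into the
   radical of [proj_sum l] and is semisimple with labels [lk]. *)
Section Resolution.
Variables (m : nat) (l : 'I_m -> Q0 Q) (p : nat) (lk : 'I_p -> Q0 Q)
  (Iota : 'M[k]_(p, rad_dim l)).

Definition res_proj j : mod :=
  if j is j'.+1 then proj_sum (projT2 (syz_labels lk j')) else proj_sum l.

Definition res_diff j : 'M[k]_(mdim (res_proj j.+1), mdim (res_proj j)) :=
  match j return 'M[k]_(mdim (res_proj j.+1), mdim (res_proj j)) with
  | 0 => block_mx 0 Iota 0 0
  | j'.+1 => rad_incl (projT2 (syz_labels lk j'))
  end.

Lemma res_diff_proj_res (X : mod) (eps : 'M[k]_(m + rad_dim l, mdim X))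
    (R : 'M[k]_(rad_dim l, p)) :
  is_hom (X := proj_sum l) eps -> row_full eps ->
  res_diff 0 *m eps = 0 -> (kermx eps <= res_diff 0)%MS ->
  Iota *m R = 1%:M ->
  (forall u, vert_mx lk u *m Iota = Iota *m vert_mx (rad_label l) u) ->
  proj_res res_diff eps.
Proof.
move=> Heps eps_full d0eps keps IotaR Iota_lab; split => //.
- by case=> [|j]; apply: proj_sum_projective.
- case=> [|j]; last exact: rad_incl_hom.
  by apply/layered_homP; split=> *; rewrite ?mulmx0 ?mul0mx.
- case=> [|j]; split.
  + by rewrite /= /rad_incl mulmx_block ?mulmx0 ?mul0mx ?addr0 ?mul1mx block_mx0.
  + apply: kermx_in_rad => A; rewrite -[A]hsubmxK mul_row_block ?mulmx0 ?mul0mx.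
    rewrite ?addr0 ?add0r -row_mx0 => /eq_row_mx[_ AI]; rewrite row_mxKl.
    by rewrite -[lsubmx A]mulmx1 -IotaR mulmxA AI mul0mx.
  + by rewrite /= /rad_incl mulmx_block ?mulmx0 ?mul0mx ?addr0 ?mul1mx block_mx0.
  + apply: kermx_in_rad => A; rewrite /= /rad_incl -[A]hsubmxK mul_row_block.
    rewrite ?mulmx0 ?mul0mx ?addr0 ?add0r -row_mx0 => /eq_row_mx[_ A1].
    by rewrite row_mxKl -A1 mulmx1.
Qed.

End Resolution.

Definition hom_exact (P2 P1 P0 Y : mod) (d1 : 'M[k]_(mdim P1, mdim P0))
    (d2 : 'M[k]_(mdim P2, mdim P1)) : Prop :=
  forall f : 'M[k]_(mdim P1, mdim Y), is_hom f -> d2 *m f = 0 ->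
  exists g : 'M[k]_(mdim P0, mdim Y), is_hom g /\ f = d1 *m g.
Arguments hom_exact {P2 P1 P0} Y d1 d2.

(* [f] sends the radical vectors (b0, a0) and (b0, a1) of [proj_sum L] to a0
   and 0 in P_v, whereas a map on [proj_sum L] scales all the (b0, a) alike. *)
Lemma rad_incl_not_hom_exact n (L : 'I_n -> Q0 Q) v (b0 : 'I_n) a0 a1 :
  L b0 = v -> qs a0 = v -> qs a1 = v -> a0 != a1 ->
  ~ hom_exact (proj_at v) (rad_incl L) (rad_incl (rad_label L)).
Proof.
move=> Lb0 a0v a1v a01 exact_v; pose lv := fun _ : 'I_1 => v.
pose phi : 'M[k]_(rad_dim L, rad_dim lv) :=
  \matrix_(j, y) ((rad_elt L j == (b0, a0)) && (rad_elt lv y == (ord0, a0)))%:R.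
pose f : 'M[k]_(mdim (proj_sum (rad_label L)), mdim (proj_at v)) :=
  block_mx (0 : 'M[k]_(rad_dim L, 1)) phi 0 0.
have Hf : is_hom f.
  apply/layered_homP; split=> [u|u|u|u|a]; rewrite ?mulmx0 ?mul0mx //.
  apply/matrixP => j y; rewrite mul_vert_mx mul_mx_vert mxE.
  case: andP => [[/eqP E1 /eqP E2]|_]; last by rewrite mulr0 mul0r.
  by rewrite /rad_label E1 E2 mulr1 mul1r.
have d2f0 : rad_incl (rad_label L) *m f = 0.
  by rewrite /= /rad_incl mulmx_block ?mulmx0 ?mul0mx ?addr0 block_mx0.
have [g [Hg]] := exact_v _ Hf d2f0.
rewrite -[g]submxK in Hg *.
rewrite /f /= /rad_incl mulmx_block ?mul0mx ?mul1mx ?add0r ?addr0.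
case/eq_block_mx => _ phiE _ _; case/layered_homP: Hg => _ _ _ _ g_ma.
have phi_g a (Ha : qs a == L b0) (Hv : qs a == lv ord0) :
    phi (enum_rank (rad_pair Ha)) (enum_rank (rad_pair Hv)) = ulsubmx g b0 ord0.
  have [_ E _] := g_ma a.
  have := congr1 (fun M : 'M[k]_(n, rad_dim lv) => M b0 (enum_rank (rad_pair Hv))) E.
  rewrite -phiE [LHS]mxE [RHS]mxE big_ord1.
  under eq_bigr do rewrite [rad_arrow_mx _ _ _ _]mxE.
  by rewrite (sum_rad_pair _ Ha) [rad_arrow_mx _ _ _ _]mxE rad_elt_pair eqxx mulr1.
have Ha0 : qs a0 == L b0 by rewrite a0v Lb0.
have Ha1 : qs a1 == L b0 by rewrite a1v Lb0.
have := phi_g _ Ha1 (introT eqP a1v); rewrite -(phi_g _ Ha0 (introT eqP a0v)) !mxE.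
rewrite !rad_elt_pair !eqxx !xpair_eqE eqxx /= eq_sym (negbTE a01) => /eqP.
by rewrite eq_sym oner_eq0.
Qed.

Lemma rad_arrow_mx0 n (l : 'I_n -> Q0 Q) a :
  (forall i, qs a != l i) -> rad_arrow_mx l a = 0.
Proof.
move=> la; apply/matrixP => i j; rewrite !mxE; case: eqP => // E.
by have := rad_eltP j; rewrite E /= (negbTE (la i)).
Qed.

(* At a sink P_v = S_v is simple, so every map to it kills the radical, where
   the image of [res_diff 0] lies; the projection onto a summand S_v of the
   syzygy therefore does not factor. *)
Lemma sink_not_hom_exact m (l : 'I_m -> Q0 Q) p (lk : 'I_p -> Q0 Q)
    (Iota : 'M[k]_(p, rad_dim l)) v (b0 : 'I_p) :
  lk b0 = v -> (forall a, qs a != v) ->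
  ~ hom_exact (proj_at v) (res_diff lk Iota 0) (res_diff lk Iota 1).
Proof.
move=> lkb0 sink exact_v.
pose f : 'M[k]_(mdim (proj_sum lk), mdim (proj_at v)) :=
  block_mx (\matrix_(j, _) (j == b0)%:R) 0 0 0.
have Hf : is_hom f.
  apply/layered_homP; split=> [u|u|u|u|a]; rewrite ?mulmx0 ?mul0mx //;
    rewrite ?(rad_arrow_mx0 (fun=> sink a)) ?mulmx0 //.
  apply/matrixP => j i; rewrite mul_vert_mx mul_mx_vert mxE.
  by case: (j =P b0) => [->|_]; [rewrite lkb0 mulr1 mul1r | rewrite mulr0 mul0r].
have d1f0 : res_diff lk Iota 1 *m f = 0.
  by rewrite /= /rad_incl mulmx_block ?mulmx0 ?mul0mx ?addr0 ?mul1mx block_mx0.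
have [g [Hg fE]] := exact_v _ Hf d1f0.
have g_rad0 : dsubmx g = 0.
  apply/row_matrixP => j; rewrite (proj2 (proj_sum_homE Hg)) row0 /= /layered_ma.
  by rewrite (rad_arrow_mx0 (fun=> sink _)) block_mx0 mulmx0.
have d0g0 : res_diff lk Iota 0 *m g = 0.
  by rewrite -[g]vsubmxK g_rad0 /= mul_block_col ?mulmx0 ?mul0mx ?addr0 col_mx0.
have := congr1 (fun M : 'M[k]_(p + rad_dim lk, 1 + rad_dim (fun _ : 'I_1 => v)) =>
  M (lshift _ b0) (lshift _ ord0)) fE.
by rewrite d0g0 /f block_mxEul !mxE eqxx => /eqP; rewrite oner_eq0.
Qed.

Section InjectiveResolution.
Variable v : Q0 Q.
Local Notation lI := (@inj_label v).

(* The radical vector (t, a) of the projective cover of I_v maps onto the socle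
   iff a is the arrow ending at v that indexes t; the other ones map to 0. *)
Definition to_socle (p : 'I_(rad_dim lI)) : bool :=
  (rad_elt lI p).2 == in_arrow (rad_elt lI p).1.
Definition socle_col : 'M[k]_(rad_dim lI, 1) := \matrix_(p, _) (to_socle p)%:R.
Definition inj_cover : 'M[k]_(mdim (proj_sum lI), mdim (inj_at v)) :=
  block_mx 1%:M 0 0 socle_col.

Lemma to_socle_label p : to_socle p -> rad_label lI p = v.
Proof. by move/eqP => E; rewrite /rad_label E; apply/eqP; exact: in_arrowP. Qed.

Lemma inj_cover_hom : is_hom inj_cover.
Proof.
apply/layered_homP; split=> [u|u|u|u|a]; rewrite ?mulmx0 ?mul0mx ?mulmx1 ?mul1mx //.
  apply/matrixP => p i; rewrite mul_vert_mx mul_mx_vert mxE.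
  by case H: (to_socle p); rewrite ?mulr0 ?mul0r // (to_socle_label H) mulr1 mul1r.
split=> //; apply/matrixP => t i; rewrite !mxE.
under eq_bigr do rewrite [rad_arrow_mx _ _ _ _]mxE [socle_col _ _]mxE.
have [H|H] := boolP (qs a == lI t).
  by rewrite (sum_rad_pair _ H) /to_socle rad_elt_pair eq_sym.
rewrite sum_rad_none //; case: eqP => // E.
by move: H; rewrite /inj_label E eqxx.
Qed.

Variable i0 : 'I_(rad_dim lI).
Hypothesis i0_socle : to_socle i0.

Lemma inj_cover_full : row_full inj_cover.
Proof.
rewrite -sub1mx; apply/submxP.
exists (block_mx 1%:M 0 0 (\matrix_(i, p) (p == i0)%:R)).
rewrite mulmx_block ?mulmx0 ?mul0mx ?addr0 ?add0r ?mul1mx ?mulmx1 scalar_mx_block.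
congr block_mx; apply/matrixP => i j; rewrite !mxE (ord1 i) (ord1 j) /=.
under eq_bigr do rewrite !mxE.
by rewrite sum_pick i0_socle.
Qed.

Definition syz_dim := (rad_dim lI).-1.
Definition syz_label (j : 'I_syz_dim) : Q0 Q := rad_label lI (lift i0 j).

(* The syzygy of I_v has the basis: each radical vector p other than [i0],
   minus [i0] when p also maps onto the socle. *)
Definition syz_incl : 'M[k]_(syz_dim, rad_dim lI) :=
  \matrix_(j, p) ((p == lift i0 j)%:R - ((to_socle (lift i0 j)) && (p == i0))%:R).
Definition syz_retr : 'M[k]_(rad_dim lI, syz_dim) := \matrix_(p, j) (p == lift i0 j)%:R.

Lemma syz_incl_socle : syz_incl *m socle_col = 0.
Proof.
apply/matrixP => j i; rewrite !mxE.
under eq_bigr do rewrite !mxE mulrBl.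
rewrite sumrB sum_pick; case: (to_socle (lift i0 j)) => /=.
  by rewrite sum_pick i0_socle subrr.
by rewrite big1 ?subr0 // => p _; rewrite mul0r.
Qed.

Lemma syz_incl_retr : syz_incl *m syz_retr = 1%:M.
Proof.
apply/matrixP => j j'; rewrite !mxE.
under eq_bigr do rewrite !mxE mulrC.
rewrite sum_pick (inj_eq (@lift_inj _ i0)) eq_sym.
by rewrite [lift _ _ == i0]eq_sym (negbTE (neq_lift _ _)) andbF subr0.
Qed.

Lemma syz_incl_label u :
  vert_mx syz_label u *m syz_incl = syz_incl *m vert_mx (rad_label lI) u.
Proof.
apply/matrixP => j p; rewrite mul_vert_mx mul_mx_vert mxE.
case: (eqVneq p (lift i0 j)) => [->|np].
  by rewrite [lift _ _ == i0]eq_sym (negbTE (neq_lift _ _)) andbF subr0 mulr1 mul1r.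
rewrite sub0r; case: (eqVneq p i0) => [->|];
  rewrite ?andbF ?andbT ?oppr0 ?mulr0 ?mul0r //.
case H: (to_socle (lift i0 j)); rewrite ?oppr0 ?mulr0 ?mul0r //.
by rewrite /syz_label (to_socle_label H) (to_socle_label i0_socle) mulrC.
Qed.

Lemma syz_retr_incl q (W : 'M[k]_(q, rad_dim lI)) :
  W *m socle_col = 0 -> W *m syz_retr *m syz_incl = W.
Proof.
move=> W0; apply/matrixP => r p; rewrite !mxE.
have WR j : (W *m syz_retr) r j = W r (lift i0 j).
  by rewrite !mxE; under eq_bigr do rewrite !mxE mulrC; rewrite sum_pick.
under eq_bigr do rewrite WR !mxE.
have := congr1 (fun M : 'M[k]_(q, 1) => M r ord0) W0.
rewrite !mxE (bigD1_ord i0) //= mxE i0_socle mulr1.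
under eq_bigr do rewrite mxE.
move=> Wi0; case: (eqVneq p i0) => [->|np].
  under eq_bigr do rewrite [i0 == lift _ _](negbTE (neq_lift _ _)) andbT sub0r mulrN.
  by rewrite sumrN; apply/eqP; rewrite eq_sym -subr_eq0 opprK Wi0.
rewrite eq_sym in np; have [j' -> _] := unlift_some np.
under eq_bigr do rewrite andbF subr0 (inj_eq (@lift_inj _ i0)) eq_sym mulrC.
by rewrite sum_pick.
Qed.

Lemma inj_cover_syz : res_diff syz_label syz_incl 0 *m inj_cover = 0.
Proof.
by rewrite /= mulmx_block ?mulmx0 ?mul0mx ?addr0 ?add0r syz_incl_socle block_mx0.
Qed.

Lemma kermx_inj_cover : (kermx inj_cover <= res_diff syz_label syz_incl 0)%MS.
Proof.
have := mulmx_ker inj_cover; rewrite -[kermx inj_cover]hsubmxK mul_row_block.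
rewrite ?mulmx0 ?mulmx1 ?addr0 ?add0r -row_mx0 => /eq_row_mx[top0 rad_socle0].
apply/submxP; exists (row_mx (rsubmx (kermx inj_cover) *m syz_retr) 0).
by rewrite /= mul_row_block ?mulmx0 ?mul0mx ?addr0 ?add0r syz_retr_incl // top0.
Qed.

Lemma inj_at_res : proj_res (res_diff syz_label syz_incl) inj_cover.
Proof.
exact: (res_diff_proj_res inj_cover_hom inj_cover_full inj_cover_syz kermx_inj_cover
  syz_incl_retr syz_incl_label).
Qed.

End InjectiveResolution.

(* At a source I_v = S_v, covered by P_v with kernel rad P_v. *)
Definition source_cover v : 'M[k]_(mdim (proj_at v), mdim (inj_at v)) :=
  block_mx 0 1%:M 0 0.

Lemma in_dim_indeg (v : Q0 Q) : in_dim v = indeg v.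
Proof. by rewrite /in_dim card_sig /indeg cardsE. Qed.

Lemma source_inj_res (v : Q0 Q) : indeg v = 0%N ->
  proj_res (res_diff (rad_label (fun _ : 'I_1 => v)) 1%:M) (source_cover v).
Proof.
rewrite -in_dim_indeg => in0; apply: (res_diff_proj_res (R := 1%:M)).
- by apply/layered_homP; split=> *; rewrite ?mulmx0 ?mul0mx ?mulmx1 ?mul1mx.
- rewrite -sub1mx; apply/submxP; exists (block_mx (0 : 'M[k]_(in_dim v, 1)) 0 1%:M 0).
  rewrite mulmx_block ?mulmx0 ?mul0mx ?addr0 ?add0r ?mul1mx ?mulmx1 scalar_mx_block.
  by congr block_mx; apply/matrixP => -[i lt_i]; have := leq_trans lt_i (eq_leq in0).
- by rewrite /= mulmx_block ?mulmx0 ?mul0mx ?addr0 ?add0r block_mx0.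
- apply: kermx_in_rad => A; rewrite -[A]hsubmxK mul_row_block ?mulmx0 ?mul0mx.
  by rewrite ?addr0 ?add0r -row_mx0 => /eq_row_mx[_ E]; rewrite row_mxKl -E mulmx1.
- by rewrite mulmx1.
- by move=> u; rewrite mulmx1 mul1mx.
Qed.

Lemma two_arrows_out (v : Q0 Q) :
  (1 < outdeg v)%N -> exists a0 a1, [/\ qs a0 = v, qs a1 = v & a0 != a1].
Proof.
case/card_gt1P => a0 [a1 [a0v a1v a01]]; move: a0v a1v; rewrite !inE => /eqP a0v /eqP a1v.
by exists a0, a1.
Qed.

Lemma sink_of_outdeg0 (v : Q0 Q) : outdeg v = 0%N -> forall a, qs a != v.
Proof. by move=> out0 a; have := card0_eq out0 a; rewrite !inE => ->. Qed.

(* Two arrows c0, c1 into v, indexing top vectors t0, t1 of I_v, give the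
   vector (t0, c0) - (t1, c1) of its syzygy, which spans a summand S_v. *)
Lemma syz_has_vertex (v : Q0 Q) : (1 < indeg v)%N ->
  exists i0 : 'I_(rad_dim (@inj_label v)),
    to_socle i0 /\ exists b0 : 'I_(syz_dim v), syz_label i0 b0 = v.
Proof.
rewrite -in_dim_indeg => in2.
pose top t : rad_basis (@inj_label v) := rad_pair (eqxx (qs (in_arrow t))).
pose p t := enum_rank (top t).
have p_socle t : to_socle (p t) by rewrite /to_socle rad_elt_pair.
have p_inj : injective p.
  by move=> s t /(congr1 (@rad_elt _ _)); rewrite !rad_elt_pair => -[].
have p01 : p (Ordinal (ltnW in2)) != p (Ordinal in2) by rewrite (inj_eq p_inj).
have [b0 b0E _] := unlift_some p01.
exists (p (Ordinal (ltnW in2))); split=> //.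
by exists b0; rewrite /syz_label -b0E to_socle_label.
Qed.

Lemma ext1_inj_proj_source (v : Q0 Q) : indeg v = 0%N -> (1 < outdeg v)%N ->
  ~ ext_vanish 1 (inj_at v) (proj_at v).
Proof.
move=> in0 /two_arrows_out[a0 [a1 [a0v a1v a01]]] ext1.
apply: (rad_incl_not_hom_exact (b0 := ord0) (L := fun _ : 'I_1 => v) erefl a0v a1v a01).
exact: ext1 _ _ _ (source_inj_res in0).
Qed.

Lemma ext1_inj_proj_sink (v : Q0 Q) : outdeg v = 0%N -> (1 < indeg v)%N ->
  ~ ext_vanish 1 (inj_at v) (proj_at v).
Proof.
move=> /sink_of_outdeg0 sink /syz_has_vertex[i0 [i0_socle [b0 b0v]]] ext1.
apply: (sink_not_hom_exact b0v sink).
exact: ext1 _ _ _ (inj_at_res i0_socle).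
Qed.

Lemma ext2_inj_proj (v : Q0 Q) : (1 < indeg v)%N -> (1 < outdeg v)%N ->
  ~ ext_vanish 2 (inj_at v) (proj_at v).
Proof.
move=> /syz_has_vertex[i0 [i0_socle [b0 b0v]]].
move=> /two_arrows_out[a0 [a1 [a0v a1v a01]]] ext2.
apply: (rad_incl_not_hom_exact b0v a0v a1v a01).
exact: ext2 _ _ _ (inj_at_res i0_socle).
Qed.

End RadicalSquareZero.

Local Close Scope ring_scope.

Theorem lemma2p3 (k : fieldType) (Q : quiver) (n : nat)
  (C : rmod k Q -> Prop) (v : Q0 Q) :
  connected_quiver Q -> (2 <= n)%N -> n_cluster_tilting n C ->
  [/\ (outdeg v = 2 -> (1 <= indeg v)%N),
      (indeg v = 2 -> (1 <= outdeg v)%N) &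
      (indeg v = 2 -> outdeg v = 2 -> n = 2)].
Proof.
move=> _ n_ge2 [_ C_ext_from C_ext_to].
have CP : C (proj_at k v).
  by apply/C_ext_from => -[|i] // _ Y _; apply/ext_vanish_proj/proj_sum_projective.
have CI : C (inj_at k v) by apply/C_ext_to => -[|i] // _ Y _; apply: ext_vanish_inj.
have ext_IP i : 0 < i < n -> ext_vanish i (inj_at k v) (proj_at k v).
  by move=> i_lt; apply: (proj1 (C_ext_from _) CI).
split=> [out2 | in2 | in2 out2].
- rewrite lt0n; apply/eqP => in0.
  by apply: (ext1_inj_proj_source in0 _ (ext_IP 1 _)); rewrite ?out2.
- rewrite lt0n; apply/eqP => out0.
  by apply: (ext1_inj_proj_sink out0 _ (ext_IP 1 _)); rewrite ?in2.
- apply/eqP; rewrite eqn_leq n_ge2 andbT leqNgt; apply/negP => n_gt2.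
  by apply: (ext2_inj_proj _ _ (ext_IP 2 _)); rewrite ?in2 ?out2.
Qed.
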